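(* Let $X$ be a compact metric space and $(f_n)_{n\ge1}$ a sequence of continuous maps $X\to X$. Suppose that either (1) the family $\{f_1^n:n\in\mathbb{N}\}$ is equicontinuous; or (2) $(f_n)$ converges uniformly to a function $\phi\colon X\to X$ and the family $\{\phi\circ f_1^n:n\in\mathbb{N}\}$ is equicontinuous. Then $f_1^p\colon X\to X$ is continuous for every $p\in\mathbb{N}^*$.
   Context: $\mathbb{N}^*$ is the set of free ultrafilters on $\mathbb{N}=\{1,2,\dots\}$. For $p\in\mathbb{N}^*$, $p\text{-}\lim_n x_n$ is the unique $y$ with $\{n:x_n\in V\}\in p$ for all neighbourhoods $V$ of $y$. $f_1^n=f_n\circ\cdots\circ f_1$ and $f_1^p(x)=p\text{-}\lim_n f_1^n(x)$. *)

From HB Require Import structures.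
From mathcomp Require Import all_boot all_order all_algebra.
From mathcomp Require Import all_classical all_reals all_analysis.
Set Implicit Arguments. Unset Strict Implicit. Unset Printing Implicit Defensive.
Import Order.TTheory GRing.Theory Num.Theory.
Local Open Scope classical_set_scope.

(* Indexing convention: f : nat -> X -> X, with f n standing for f_n for
   n >= 1 (the value f 0 is never used).  comp1 f n = f_n o ... o f_1,
   and comp1 f 0 = id (only used at n = 0, which is irrelevant below). *)
Fixpoint comp1 {X : Type} (f : nat -> X -> X) (n : nat) : X -> X :=
  match n with
  | 0 => id
  | m.+1 => f m.+1 \o comp1 f m
  end.

Definition free_ultrafilter (p : set_system nat) : Prop :=
  UltraFilter p /\ (forall n : nat, exists A, p A /\ ~ A n).

(* p-lim_n u_n : the (unique, in a Hausdorff space) y with u @ p --> y,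
   i.e. {n | u n \in V} \in p for every neighbourhood V of y.
   (xget returns the default u 0 if no such point exists, which does not
   happen in a compact Hausdorff space.) *)
Definition plim {X : topologicalType} (p : set_system nat) (u : nat -> X) : X :=
  xget (u 0%N) [set y | u @ p --> y].

Definition f1p {X : topologicalType} (p : set_system nat) (f : nat -> X -> X)
  : X -> X := fun x => plim p (fun n => comp1 f n x).

Local Open Scope ring_scope.
Definition equicont {R : realType} {X : metricType R} (W : set nat)
  (g : nat -> X -> X) : Prop :=
  forall (x : X) (e : R), 0 < e -> exists2 d : R, 0 < d &
    forall y : X, ball x d y -> forall n, W n -> ball (g n x) e (g n y).

Definition unif_cvg {R : realType} {X : metricType R} (f : nat -> X -> X)
  (phi : X -> X) : Prop :=
  forall e : R, 0 < e -> \forall n \near \oo, forall x : X, ball (phi x) e (f n x).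

From HB Require Import structures.
From mathcomp Require Import all_boot all_order all_algebra.
From mathcomp Require Import all_classical all_reals all_analysis.
From mathcomp Require Import lra.
Import Order.TTheory GRing.Theory Num.Theory.
Local Open Scope classical_set_scope.

(* In a compact space every sequence has a p-limit, since a cluster point of
   an ultrafilter is a limit of it.  In both cases the maps f_1^n are
   equicontinuous for all large n: in case (2) because
   f_1^(n+1) = f_(n+1) o f_1^n is uniformly close to phi o f_1^n.  A free
   ultrafilter contains every cofinite set, so this equicontinuity holds for
   p-almost all n, and by the triangle inequality it passes to the p-limit. *)

Lemma plim_cvg {X : topologicalType} {p : set_system nat} {u : nat -> X} :
  compact [set: X] -> UltraFilter p -> u @ p --> plim p u.
Proof.
move=> hXc Up; suff u_cvg : exists y : X, u @ p --> y.
  exact: (xgetPex (u 0%N) u_cvg).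
have [y [_ clu_y]] := hXc (u @ p) _ filterT.
exists y => V /= yV.
case: (in_ultra_setVsetC (u @^-1` V) Up) => // pnV.
by have [z [nVz Vz]] := clu_y (~` V) _ pnV yV.
Qed.

Lemma free_ultrafilter_eventually {p : set_system nat} :
  free_ultrafilter p -> \oo `<=` p.
Proof.
move=> [Up p_free]; have PF := @ultra_proper _ _ Up.
suff p_ge N : p [set n | (N <= n)%N].
  by move=> A [N _ sNA]; exact: (filterS sNA (p_ge N)).
elim: N => [|N IH]; first exact: filterS (fun n _ => leq0n n) filterT.
have [B [pB nBN]] := p_free N.
apply: (filterS _ (filterI IH pB)) => n [/= leNn Bn].
by rewrite ltn_neqAle leNn andbT; apply: contra_notN nBN => /eqP ->.
Qed.

Local Open Scope ring_scope.

Lemma ball_cvg_lim {R : realType} {X : pseudoMetricType R} {T : Type}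
    {F : set_system T} {u v : T -> X} {a b : X} {c e : R} :
  ProperFilter F -> u @ F --> a -> v @ F --> b ->
  (\forall t \near F, ball (u t) c (v t)) -> c < e -> ball a e b.
Proof.
move=> PF ua vb uv ce; have FF : Filter F := PF.
have h_gt0 : 0 < (e - c) / 2 by rewrite divr_gt0 // subr_gt0.
have near_a : \forall t \near F, ball a ((e - c) / 2) (u t) by exact: cvg_ball ua _ h_gt0.
have near_b : \forall t \near F, ball b ((e - c) / 2) (v t) by exact: cvg_ball vb _ h_gt0.
have [t [[at_ bt] uvt]] := filter_ex (filterI (filterI near_a near_b) uv).
apply: (@le_ball _ _ _ ((e - c) / 2 + c + (e - c) / 2)); first lra.
exact: ball_triangle (ball_triangle at_ uvt) (ball_sym bt).
Qed.

Section EquicontAlong.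
Context {R : realType} {X : metricType R}.

Definition equicont_along (F : set_system nat) (g : nat -> X -> X) : Prop :=
  forall (x : X) (e : R), 0 < e -> exists2 d : R, 0 < d &
    forall y : X, ball x d y -> \forall n \near F, ball (g n x) e (g n y).

Lemma equicont_alongS {F G : set_system nat} {g : nat -> X -> X} :
  F `<=` G -> equicont_along F g -> equicont_along G g.
Proof.
move=> sFG eqg x e e_gt0; have [d d_gt0 hd] := eqg x e e_gt0.
by exists d => // y /hd /sFG.
Qed.

Lemma equicont_along_eventually {W : set nat} {g : nat -> X -> X} :
  (\forall n \near \oo, W n) -> equicont W g -> equicont_along \oo g.
Proof.
move=> evW eqg x e e_gt0; have [d d_gt0 hd] := eqg x e e_gt0.
by exists d => // y /hd xy; apply: filterS evW.
Qed.

Lemma equicont_along_plim {p : set_system nat} {g : nat -> X -> X} :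
  compact [set: X] -> UltraFilter p -> equicont_along p g ->
  continuous (fun x => plim p (g ^~ x)).
Proof.
move=> hXc Up eqg x; apply/cvg_ballP => e e_gt0.
have e2_gt0 : 0 < e / 2 by rewrite divr_gt0.
have [d d_gt0 hd] := eqg x _ e2_gt0.
apply/nbhs_ballP; exists d => //= y /hd near_xy.
apply: (ball_cvg_lim _ (plim_cvg hXc Up) (plim_cvg hXc Up) near_xy).
lra.
Qed.

Lemma unif_cvg_equicont_along {f : nat -> X -> X} {phi : X -> X} :
  unif_cvg f phi ->
  equicont [set n : nat | (0 < n)%N] (fun n => phi \o comp1 f n) ->
  equicont_along \oo (comp1 f).
Proof.
move=> f_phi eq_phi x e e_gt0.
have e3_gt0 : 0 < e / 3 by rewrite divr_gt0.
have [d d_gt0 hd] := eq_phi x _ e3_gt0; exists d => // y xy.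
have [N _ hN] := f_phi _ e3_gt0.
exists N.+2 => // -[|m] //= leNm.
have leNSm : (N <= m.+1)%N by apply/ltnW/ltnW.
have m_gt0 : (0 < m)%N by exact: leq_trans (ltn0Sn N) leNm.
apply: (@le_ball _ _ _ (e / 3 + e / 3 + e / 3)); first lra.
apply: ball_triangle (hN _ leNSm _).
exact: ball_triangle (ball_sym (hN _ leNSm _)) (hd _ xy _ m_gt0).
Qed.

End EquicontAlong.

Theorem theorem3p7 (R : realType) (X : metricType R)
  (hXc : compact [set: X]) (f : nat -> X -> X)
  (hf : forall n : nat, (0 < n)%N -> continuous (f n)) :
  (equicont [set n : nat | (0 < n)%N] (comp1 f)
   \/ exists phi : X -> X,
        unif_cvg f phi /\
        equicont [set n : nat | (0 < n)%N] (fun n => phi \o comp1 f n)) ->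
  forall p : set_system nat, free_ultrafilter p -> continuous (f1p p f).
Proof.
move=> hyp p p_free.
have eq_oo : equicont_along \oo (comp1 f).
  case: hyp => [eqf | [phi [f_phi eq_phi]]].
  - by apply: equicont_along_eventually eqf; exists 1%N.
  - exact: unif_cvg_equicont_along f_phi eq_phi.
apply: (equicont_along_plim (g := comp1 f) hXc p_free.1).
exact: equicont_alongS (free_ultrafilter_eventually p_free) eq_oo.
Qed.
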